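(* Let $t\le 1/2$ be a positive rational number and let $G$ be a minimally $t$-tough split graph whose vertex set is partitioned into a clique $C$ and an independent set $I$. Then there exists a positive integer $b$ such that $t=1/b$ and $|C|\le 3$. Moreover, either (1) $G$ is a tree with at most two internal (non-leaf) vertices and with maximum degree $\Delta(G)=b$, or (2) $|C|=3$, every vertex in $I$ has degree $1$, and every vertex in $C$ has degree $b+1$.
   Context: All graphs are finite, simple and undirected. A graph is split if its vertex set can be partitioned into a clique and an independent set. $\omega(H)$ denotes the number of components of $H$. A cutset of $G$ is a vertex set $S$ with $G-S$ disconnected. For positive real $t$, $G$ is $t$-tough if $\omega(G-S)\le |S|/t$ for every cutset $S$; the toughness $\tau(G)$ is the largest such $t$, with $\tau(K_n)=\infty$ for all $n\ge1$. $G$ is minimally $t$-tough if $\tau(G)=t$ and $\tau(G-e)<t$ for every edge $e$ of $G$. *)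

(* A finite simple graph is a finType T with a symmetric,
   irreflexive boolean adjacency relation e : rel T. *)
From mathcomp Require Import all_boot all_order all_algebra.
Set Implicit Arguments. Unset Strict Implicit. Unset Printing Implicit Defensive.
Import Order.TTheory GRing.Theory Num.Theory.

Section Graphs.
Variable T : finType.

Definition simple_graph (e : rel T) : Prop := symmetric e /\ irreflexive e.

Definition del_edge (e : rel T) (u v : T) : rel T :=
  fun x y => e x y && ~~ (((x == u) && (y == v)) || ((x == v) && (y == u))).

Definition del_vertices (e : rel T) (S : {set T}) : rel T :=
  fun x y => [&& e x y, x \notin S & y \notin S].

Definition n_components (e : rel T) (S : {set T}) : nat :=
  #|[set [set y in ~: S | connect (del_vertices e S) x y] | x in ~: S]|.

Definition cutset (e : rel T) (S : {set T}) : Prop :=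
  (1 < n_components e S)%N.

Definition tough (e : rel T) (t : rat) : Prop :=
  forall S : {set T}, cutset e S ->
    ((n_components e S)%:R <= (#|S|)%:R / t)%R.

(* tau(G) = t : t is the largest value for which G is t-tough
   (so tau(K_n) = infinity is never equal to a rational t) *)
Definition toughness_eq (e : rel T) (t : rat) : Prop :=
  tough e t /\ forall t' : rat, (t < t')%R -> ~ tough e t'.

(* tau(G) < t, for t > 0: since tau is the largest toughness value,
   this means G is not t-tough. *)
Definition toughness_lt (e : rel T) (t : rat) : Prop := ~ tough e t.

Definition minimally_tough (e : rel T) (t : rat) : Prop :=
  toughness_eq e t /\
  forall u v : T, e u v -> toughness_lt (del_edge e u v) t.

Definition is_clique (e : rel T) (C : {set T}) : Prop :=
  forall x y, x \in C -> y \in C -> x != y -> e x y.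

Definition is_independent (e : rel T) (I : {set T}) : Prop :=
  forall x y, x \in I -> y \in I -> ~~ e x y.

Definition split_partition (e : rel T) (C I : {set T}) : Prop :=
  [/\ C :&: I = set0, C :|: I = [set: T], is_clique e C & is_independent e I].

Definition deg (e : rel T) (x : T) : nat := #|[set y | e x y]|.

Definition max_deg (e : rel T) : nat := \max_(x : T) deg e x.

Definition connected (e : rel T) : Prop := forall x y, connect e x y.

Definition acyclic (e : rel T) : Prop :=
  forall s : seq T, uniq s -> (2 < size s)%N -> ~~ cycle e s.

Definition is_tree (e : rel T) : Prop :=
  (0 < #|T|)%N /\ connected e /\ acyclic e.

Definition internal_vertices (e : rel T) : {set T} :=
  [set x | (1 < deg e x)%N].

End Graphs.

(* Minimality at a clique edge xy yields a cut S of G - xy that separates x from y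
   and violates t-toughness; S contains the rest of the clique and every common
   neighbour of x and y.  For t <= 1/2 this rules out an independent vertex with two
   neighbours, so G is the clique C with pendant vertices attached.  Such a graph has
   toughness exactly 1/b, where b counts the components left after deleting a clique
   vertex carrying the most pendants.  The same cuts then give |C| <= 3 and, when
   |C| = 3, equal pendant counts; when |C| <= 2 the graph is a tree. *)

From mathcomp Require Import all_boot all_order all_algebra.
From mathcomp Require Import lra zify.
Import Order.TTheory GRing.Theory Num.Theory.
Set Implicit Arguments. Unset Strict Implicit. Unset Printing Implicit Defensive.

Lemma ltn_card_setI (T : finType) (A B : {set T}) :
  ~~ (B \subset A) -> (#|A :&: B| < #|B|)%N.
Proof. by move=> BA; rewrite proper_card // properE subsetIr subsetI subxx andbT. Qed.

Section Components.
Variables (T : finType) (r : rel T).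
Hypothesis r_sym : symmetric r.

Definition neighbours (x : T) : {set T} := [set y | r x y].

Definition component (S : {set T}) (x : T) : {set T} :=
  [set y in ~: S | connect (del_vertices r S) x y].

Lemma n_componentsE (S : {set T}) : n_components r S = #|component S @: ~: S|.
Proof. by []. Qed.

Lemma del_vertices_sym (s : rel T) (S : {set T}) :
  symmetric s -> symmetric (del_vertices s S).
Proof. by move=> s_sym x y; rewrite /del_vertices s_sym; congr (_ && _); exact: andbC. Qed.

Lemma del_edge_sym x y : symmetric (del_edge r x y).
Proof.
move=> a b; rewrite /del_edge r_sym.
by case: (a == x); case: (a == y); case: (b == x); case: (b == y).
Qed.

Lemma n_components_le_card (S R : {set T}) :
  (forall a, a \notin S -> exists2 z, z \in R & connect (del_vertices r S) a z) ->
  (n_components r S <= #|R|)%N.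
Proof.
move=> R_meets; apply: leq_trans (leq_imset_card (component S) R).
apply/subset_leq_card/subsetP => X /imsetP[a]; rewrite inE => aS ->.
have [z zR az] := R_meets a aS; apply/imsetP; exists z => //.
have csym := sym_connect_sym (del_vertices_sym S r_sym).
apply/setP => y; rewrite !inE; case: (y \in S) => //=.
by apply/idP/idP; apply: connect_trans; rewrite // csym.
Qed.

Lemma card_le_n_components (S R : {set T}) :
  R \subset ~: S ->
  {in R &, forall a b, a != b -> ~~ connect (del_vertices r S) a b} ->
  (#|R| <= n_components r S)%N.
Proof.
move=> R_out R_apart; rewrite n_componentsE -(card_in_imset (f := component S)).
  exact/subset_leq_card/imsetS.
move=> a b aR bR eq_ab; apply/eqP; apply: contraT => /(R_apart _ _ aR bR)/negPf nab.
have : b \in component S b by rewrite inE connect0 andbT (subsetP R_out).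
by rewrite -eq_ab inE nab andbF.
Qed.

Lemma isolated_disconnected (S K : {set T}) (z : T) :
  {in K, forall w, neighbours w \subset S} ->
  {in z |: K &, forall a b, a != b -> ~~ connect (del_vertices r S) a b}.
Proof.
have isolated w c : neighbours w \subset S -> connect (del_vertices r S) w c -> w = c.
  move=> NwS /connectP[[|d p] //= /andP[/and3P[rwd _ dS] _] _].
  by move: dS; rewrite (subsetP NwS) // inE.
move=> K_isolated a b; rewrite !in_setU1 => aK bK; apply: contraNN => ab.
have [aK' | aNK] := boolP (a \in K); first by rewrite (isolated _ _ (K_isolated _ aK') ab).
have [bK' | bNK] := boolP (b \in K).
  rewrite (sym_connect_sym (del_vertices_sym S r_sym)) in ab.
  by rewrite (isolated _ _ (K_isolated _ bK') ab).
by move: aK bK; rewrite (negPf aNK) (negPf bNK) !orbF => /eqP-> /eqP->.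
Qed.

Lemma n_components_del_edge (S : {set T}) x y :
  [|| x \in S, y \in S | connect (del_vertices (del_edge r x y) S) x y] ->
  n_components (del_edge r x y) S = n_components r S.
Proof.
move=> xy_cut.
have same_connect : connect (del_vertices (del_edge r x y) S) =2 connect (del_vertices r S).
  move=> u v; apply/idP/idP; apply: connect_sub => a b.
    by case/and3P=> /andP[rab _] aS bS; apply: connect1; rewrite /del_vertices rab aS bS.
  case/and3P=> rab aS bS; rewrite /del_edge.
  case xy_ab : ((a == x) && (b == y) || (a == y) && (b == x)); last first.
    by apply: connect1; rewrite /del_vertices rab xy_ab aS bS.
  move: xy_cut; case/orP: xy_ab => /andP[/eqP-> /eqP->] in aS bS *.
    by rewrite (negPf aS) (negPf bS).
  by rewrite (negPf aS) (negPf bS) (sym_connect_sym (del_vertices_sym S (del_edge_sym x y))).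
rewrite /n_components; apply: eq_card => X.
by apply/imsetP/imsetP=> -[a aS ->]; exists a => //; apply/setP => c; rewrite !inE same_connect.
Qed.

Lemma common_neighbour_in_cut (S : {set T}) x y w :
  irreflexive r -> x \notin S -> y \notin S ->
  ~~ connect (del_vertices (del_edge r x y) S) x y ->
  r w x -> r w y -> w \in S.
Proof.
move=> r_irr xS yS xNy rwx rwy; apply: contraNT xNy => wS.
have wx : w != x by apply: contraTneq rwx => ->; rewrite r_irr.
have wy : w != y by apply: contraTneq rwy => ->; rewrite r_irr.
apply: (@connect_trans _ _ w); apply: connect1; rewrite /del_vertices /del_edge.
  by rewrite r_sym rwx xS wS (negPf wx) (negPf wy) !andbF.
by rewrite rwy wS yS (negPf wx) (negPf wy).
Qed.

Lemma uniq_cycle_deg_gt1 (s : seq T) w :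
  uniq s -> (2 < size s)%N -> cycle r s -> w \in s -> (1 < deg r w)%N.
Proof.
move=> us s_gt2 cs /rot_to[i p rot_s].
have : (2 < size (w :: p))%N by rewrite -rot_s size_rot.
have : uniq (w :: p) && cycle r (w :: p) by rewrite -rot_s rot_uniq rot_cycle us.
case: p {rot_s} => [|a [|a' p]] // /andP[/and3P[_ aNp _]].
rewrite /cycle rcons_path => /andP[/andP[rwa _] /= rlw] _.
have ab : a != last a' p by apply: contraNneq aNp => ->; rewrite mem_last.
rewrite r_sym in rlw.
apply: (@leq_trans #|[set a; last a' p]|); first by rewrite cards2 ab.
by apply/subset_leq_card/subsetP => z; rewrite !inE => /orP[] /eqP->.
Qed.

Lemma cutset_card (S : {set T}) : cutset r S -> (1 < #|T|)%N.
Proof. by move/leq_trans; apply; apply: leq_trans (leq_imset_card _ _) (max_card _). Qed.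

Lemma toughness_eq_cutset t : toughness_eq r t -> exists S, cutset r S.
Proof.
case=> _ maximal; apply/existsP; apply: contraT => /existsPn none.
case: (maximal (t + 1)%R); first by rewrite ltrDl.
by move=> S cutS; move: (none S); rewrite cutS.
Qed.

Lemma tough_scattered t (S R : {set T}) :
  tough r t -> (0 < t)%R -> R \subset ~: S ->
  {in R &, forall a b, a != b -> ~~ connect (del_vertices r S) a b} ->
  (1 < #|R|)%N -> (t * #|R|%:R <= #|S|%:R)%R.
Proof.
move=> r_tough t_gt0 R_out R_apart R_gt1.
have R_le := card_le_n_components R_out R_apart.
have := r_tough S (leq_trans R_gt1 R_le); rewrite ler_pdivlMr // mulrC.
by apply: le_trans; rewrite ler_pM2l // ler_nat.
Qed.

Lemma tough_has_neighbour t w :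
  tough r t -> (0 < t)%R -> (1 < #|T|)%N -> exists z, r w z.
Proof.
move=> r_tough t_gt0 T_gt1.
apply/existsP; apply: contraT => /existsPn w_isolated.
have [z zw] : exists z, z \in [set~ w].
  by apply/card_gt0P; rewrite cardsC1 -ltnS (ltn_predK T_gt1).
have Nw0 : {in [set w], forall v, neighbours v \subset set0}.
  by move=> v /set1P->; apply/subsetP => u; rewrite inE (negPf (w_isolated u)).
have R_out : z |: [set w] \subset ~: set0 by rewrite setC0 subsetT.
have := tough_scattered r_tough t_gt0 R_out (isolated_disconnected (z := z) Nw0).
rewrite cards0 cardsU1 cards1 !inE in zw *; rewrite zw => /(_ isT).
by rewrite leNgt mulr_gt0.
Qed.

Lemma minimally_tough_edge_cut t x y :
  minimally_tough r t -> (0 < t)%R -> r x y ->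
  exists S : {set T},
    [/\ x \notin S, y \notin S, ~~ connect (del_vertices (del_edge r x y) S) x y &
        (#|S|%:R < t * (n_components (del_edge r x y) S)%:R)%R].
Proof.
move=> [[r_tough _] minimal] t_gt0 rxy.
have [S /andP[cutS S_big]] : exists S, (1 < n_components (del_edge r x y) S)%N &&
    ~~ ((n_components (del_edge r x y) S)%:R <= #|S|%:R / t)%R.
  apply/existsP; apply: contraT => /existsPn none; case: (minimal x y rxy) => S cutS.
  by have := none S; rewrite cutS negbK.
have : ~~ [|| x \in S, y \in S | connect (del_vertices (del_edge r x y) S) x y].
  apply: contra S_big => /n_components_del_edge eq_n; rewrite eq_n in cutS *.
  exact: r_tough.
rewrite !negb_or => /and3P[xS yS xNy]; exists S; split=> //.
by move: S_big; rewrite -ltNge ltr_pdivrMr // mulrC.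
Qed.

End Components.

Section SplitGraph.
Variables (T : finType) (e : rel T) (C I : {set T}).
Hypotheses (e_sym : symmetric e) (e_split : split_partition e C I).

Lemma split_cases x : (x \in C) || (x \in I).
Proof. by case: e_split => _ CI _ _; rewrite -in_setU CI inE. Qed.

Lemma split_disjoint x : x \in C -> x \notin I.
Proof.
case: e_split => CI0 _ _ _ xC; apply/negP => xI.
have : x \in C :&: I by rewrite inE xC xI.
by rewrite CI0 inE.
Qed.

Lemma clique_adj x y : x \in C -> y \in C -> x != y -> e x y.
Proof. by case: e_split => _ _ C_clique _; apply: C_clique. Qed.

Lemma indep_adj_clique w z : w \in I -> e w z -> z \in C.
Proof.
case: e_split => _ _ _ I_indep wI ewz; case/orP: (split_cases z) => // zI.
by move: (I_indep w z wI zI); rewrite ewz.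
Qed.

Definition stranded (S : {set T}) : {set T} :=
  [set w in I | (w \notin S) && (neighbours e w \subset S)].

Lemma split_n_components_le (r : rel T) (S Q : {set T}) :
  symmetric r ->
  {in C, forall a, a \notin S -> exists2 q, q \in Q & connect (del_vertices r S) a q} ->
  {in I, forall w z, e w z -> r w z} ->
  (n_components r S <= #|Q :|: stranded S|)%N.
Proof.
move=> r_sym C_to_Q e_sub_r; apply: n_components_le_card => // a aS.
case/orP: (split_cases a) => [aC | aI].
  by have [q qQ aq] := C_to_Q a aC aS; exists q; rewrite ?inE ?qQ.
case: (boolP (neighbours e a \subset S)) => [NaS | /subsetPn[z]].
  by exists a; rewrite ?connect0 // !inE aI aS NaS orbT.
rewrite inE => eaz zS; have [q qQ zq] := C_to_Q z (indep_adj_clique aI eaz) zS.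
exists q; rewrite ?inE ?qQ //; apply: connect_trans zq; apply: connect1.
by rewrite /del_vertices aS zS e_sub_r.
Qed.

Lemma n_components_split_le (S : {set T}) :
  (n_components e S <= ~~ (C \subset S) + #|stranded S|)%N.
Proof.
have e_sub_e : {in I, forall w z, e w z -> e w z} by [].
case: (boolP (C \subset S)) => [CS | /subsetPn[c0 c0C c0S]].
  apply: leq_trans (split_n_components_le (Q := set0) e_sym _ e_sub_e) _.
    by move=> a aC; rewrite (subsetP CS).
  by rewrite set0U.
apply: leq_trans (split_n_components_le (Q := [set c0]) e_sym _ e_sub_e) _.
  move=> a aC aS; exists c0; rewrite ?set11 //.
  case: (eqVneq a c0) => [-> | ac0]; first exact: connect0.
  by apply: connect1; rewrite /del_vertices aS c0S clique_adj.
by apply: leq_trans (leq_card_setU _ _) _; rewrite cards1.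
Qed.

Section MinimallyTough.
Variable t : rat.
Hypotheses (e_irr : irreflexive e) (e_min : minimally_tough e t) (t_gt0 : (0 < t)%R).

Lemma split_edge_cut x y :
  x \in C -> y \in C -> x != y ->
  exists S : {set T},
    [/\ x \notin S, y \notin S, C :\: [set x; y] \subset S,
        (forall w, e w x -> e w y -> w \in S) &
        (#|S|%:R < t * (2 + #|stranded S|)%:R)%R].
Proof.
move=> xC yC xy.
have [S [xS yS xNy S_small]] := minimally_tough_edge_cut e_sym e_min t_gt0 (clique_adj xC yC xy).
have common w : e w x -> e w y -> w \in S := common_neighbour_in_cut e_sym e_irr xS yS xNy.
have CS : C :\: [set x; y] \subset S.
  apply/subsetP => z; rewrite !inE negb_or => /andP[/andP[zx zy] zC].
  by apply: common; apply: clique_adj.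
exists S; split => //; apply: lt_le_trans S_small _; rewrite ler_pM2l // ler_nat.
apply: leq_trans (split_n_components_le (Q := [set x; y]) (del_edge_sym e_sym x y) _ _) _.
- move=> a aC aS; exists a; last exact: connect0.
  by apply: contraR aS => axy; apply: (subsetP CS); rewrite inE axy.
- move=> w wI z ewz; have [wx wy] : w != x /\ w != y.
    by split; apply: contraTneq wI => ->; rewrite split_disjoint.
  by rewrite /del_edge ewz (negPf wx) (negPf wy).
by apply: leq_trans (leq_card_setU _ _) _; rewrite leq_add2r cards2; case: (x != y).
Qed.

Lemma indep_adj_unique w u1 u2 :
  (t <= 1 / 2%:R)%R -> w \in I -> e w u1 -> e w u2 -> u1 = u2.
Proof.
move=> t_small wI ewu1 ewu2; apply/eqP; apply: contraT => u12.
have [u1C u2C] := (indep_adj_clique wI ewu1, indep_adj_clique wI ewu2).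
have [S [u1S u2S XS common S_small]] := split_edge_cut u1C u2C u12.
set X := C :\: [set u1; u2] in XS.
have S_big : (#|X| + 1 <= #|S|)%N.
  have wX : w \notin X by apply: contraL wI => /setDP[wC _]; apply: split_disjoint.
  have -> : (#|X| + 1 = #|w |: X|)%N by rewrite cardsU1 wX addnC.
  by apply/subset_leq_card; rewrite subUset sub1set XS common.
have K_isolated : {in stranded S, forall k, neighbours e k \subset X}.
  move=> k; rewrite inE => /and3P[kI _ NkS]; apply/subsetP => z Nkz.
  rewrite !inE (indep_adj_clique kI _) ?andbT; last by rewrite inE in Nkz.
  by apply: contraTN (subsetP NkS z Nkz) => /orP[] /eqP->.
have R_out : u1 |: stranded S \subset ~: X.
  apply/subsetP => a; rewrite !inE => /orP[/eqP-> | /andP[aI _]]; first by rewrite eqxx.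
  by apply: contraL aI => /andP[_ aC]; apply: split_disjoint.
have u1K : u1 \notin stranded S.
  by rewrite inE (negPf (split_disjoint u1C)).
move: S_big; rewrite -(ler_nat rat) natrD => S_big.
have X_ge0 := ler0n rat #|X|.
case: (posnP #|stranded S|) => [K0 | K_gt0].
  by move: S_small; rewrite K0 addn0 => S_small; lra.
have K_apart := isolated_disconnected e_sym (z := u1) K_isolated.
have := tough_scattered e_min.1.1 t_gt0 R_out K_apart.
rewrite cardsU1 u1K add1n ltnS => /(_ K_gt0).
(* With k = #|stranded S|: t (1 + k) <= |X| <= |S| - 1 < t (2 + k) - 1 forces t > 1. *)
by move: S_small; rewrite !natrD; nra.
Qed.

Lemma indep_unique_neighbour :
  (t <= 1 / 2%:R)%R -> exists f : T -> T, {in I, forall w z, e w z = (z == f w)}.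
Proof.
move=> t_small; have [S /cutset_card T_gt1] := toughness_eq_cutset e_min.1.
exists (fun w => odflt w [pick z | e w z]) => w wI z.
have [z0 ewz0] := tough_has_neighbour e_sym w e_min.1.1 t_gt0 T_gt1.
case: pickP => [z1 ewz1 | none] /=; last by move: (none z0); rewrite ewz0.
by apply/idP/eqP => [ewz | ->] //; apply: indep_adj_unique ewz ewz1.
Qed.

End MinimallyTough.

Section Pendants.
Variable f : T -> T.
Hypotheses (e_irr : irreflexive e) (adj_indepE : {in I, forall w z, e w z = (z == f w)}).

Definition pendants (z : T) : {set T} := [set w in I | f w == z].

Definition max_pendants : nat := \max_(z in C) #|pendants z|.

(* The number of components of G - x0 for a clique vertex x0 with the most pendants. *)
Definition tough_denom : nat := max_pendants + (1 < #|C|).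

Lemma adj_f w : w \in I -> e w (f w).
Proof. by move=> wI; rewrite adj_indepE. Qed.

Lemma f_clique w : w \in I -> f w \in C.
Proof. by move=> wI; apply: indep_adj_clique wI (adj_f wI). Qed.

Lemma deg_indep w : w \in I -> deg e w = 1%N.
Proof.
move=> wI; rewrite /deg (_ : [set y | e w y] = [set f w]) ?cards1 //.
by apply/setP => z; rewrite !inE adj_indepE.
Qed.

Lemma deg_clique x : x \in C -> deg e x = (#|C|.-1 + #|pendants x|)%N.
Proof.
move=> xC; rewrite /deg; have -> : [set y | e x y] = (C :\ x) :|: pendants x.
  apply/setP => z; rewrite !inE; case/orP: (split_cases z) => [zC | zI].
    rewrite zC (negPf (split_disjoint zC)) andbT /= orbF.
    apply/idP/idP => [exz | zx]; first by apply: contraTneq exz => ->; rewrite e_irr.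
    by apply: clique_adj; rewrite // eq_sym.
  have zNC : z \notin C by apply: contraTN zI; apply: split_disjoint.
  by rewrite zI (negPf zNC) andbF e_sym adj_indepE // eq_sym.
rewrite (cardsD1 x C) xC add1n /=; apply/eqP; rewrite (eq_leqif (leq_card_setU _ _)).
rewrite -setI_eq0; apply/eqP/setP => z; rewrite !inE.
by apply/negP => /andP[/andP[_ zC] /andP[zI _]]; move: zI; rewrite (negPf (split_disjoint zC)).
Qed.

Lemma card_preimage_le (X : {set T}) :
  X \subset C -> (#|[set w in I | f w \in X]| <= #|X| * max_pendants)%N.
Proof.
move=> XC; rewrite -sum1_card (partition_big f (mem X)) => [|w /setIdP[] //].
rewrite -sum_nat_const; apply: leq_sum => z zX; rewrite sum1_card.
apply: leq_trans (leq_bigmax_cond _ (subsetP XC z zX)); apply/subset_leq_card/subsetP => w.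
by rewrite unfold_in /= !inE => /andP[/andP[-> _] ->].
Qed.

Lemma n_components_pendant_le (S : {set T}) :
  (n_components e S <= ~~ (C \subset S) + #|S :&: C| * max_pendants)%N.
Proof.
apply: leq_trans (n_components_split_le S) _; rewrite leq_add2l.
apply: leq_trans (card_preimage_le (subsetIr S C)); apply/subset_leq_card/subsetP => w.
rewrite !inE => /andP[wI /andP[_ NwS]]; rewrite wI f_clique // andbT.
by apply: (subsetP NwS); rewrite inE adj_f.
Qed.

Lemma tough_denom_gt1 (S : {set T}) : cutset e S -> (1 < tough_denom)%N.
Proof.
move=> /leq_trans/(_ (n_components_pendant_le S)).
have SC_le : (#|S :&: C| <= #|C|)%N by apply/subset_leq_card/subsetIr.
rewrite /tough_denom; case: (boolP (C \subset S)) => [_ | /ltn_card_setI] /=; by nia.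
Qed.

Lemma card_clique_gt0 : (0 < tough_denom)%N -> (0 < #|C|)%N.
Proof.
rewrite !lt0n; apply: contraNneq => /cards0_eq C0.
by rewrite /tough_denom /max_pendants C0 big_set0 cards0.
Qed.

Lemma tough_inv_denom : tough e (1 / tough_denom%:R).
Proof.
move=> S cutS; rewrite div1r invrK -natrM ler_nat mulnC.
have n_le := n_components_pendant_le S.
have SC_le : (#|S :&: C| <= #|S|)%N by apply/subset_leq_card/subsetIl.
have n_gt1 := leq_trans cutS n_le; apply: leq_trans n_le _; move: n_gt1.
rewrite /tough_denom; case: (boolP (C \subset S)) => [_ | /ltn_card_setI] /=; by nia.
Qed.

Lemma tough_mul_denom_le1 t :
  tough e t -> (0 < t)%R -> (1 < tough_denom)%N -> (t * tough_denom%:R <= 1)%R.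
Proof.
move=> e_tough t_gt0 b_gt1.
have [x0 x0C x0_max] := eq_bigmax_cond (fun z => #|pendants z|) (card_clique_gt0 (ltnW b_gt1)).
have Px0_I : pendants x0 \subset I by apply/subsetP => w /setIdP[].
have Px0_isolated : {in pendants x0, forall w, neighbours e w \subset [set x0]}.
  by move=> w /setIdP[wI /eqP fw]; apply/subsetP => z; rewrite !inE adj_indepE // fw.
have [z zx0 R_card] : exists2 z, z != x0 & #|z |: pendants x0| = tough_denom.
  rewrite /tough_denom /max_pendants x0_max; case: (ltnP 1 #|C|) => C_gt1.
    have /card_gt0P[y] : (0 < #|C :\ x0|)%N by move: C_gt1; rewrite (cardsD1 x0 C) x0C.
    rewrite !inE => /andP[yx0 yC]; exists y => //.
    have yNP : y \notin pendants x0 by rewrite inE (negPf (split_disjoint yC)).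
    by rewrite cardsU1 yNP addnC.
  have /card_gt0P[w wP] : (0 < #|pendants x0|)%N.
    move: b_gt1; rewrite /tough_denom /max_pendants x0_max (ltnNge 1 #|C|) C_gt1.
    by rewrite addn0 => /ltnW.
  exists w; last by rewrite cardsU1 wP addn0.
  by apply: contraTneq (subsetP Px0_I w wP) => ->; apply: split_disjoint.
have R_out : z |: pendants x0 \subset ~: [set x0].
  apply/subsetP => a; rewrite !inE => /orP[/eqP-> // | /andP[aI _]].
  by apply: contraTneq aI => ->; apply: split_disjoint.
have := tough_scattered e_tough t_gt0 R_out (isolated_disconnected e_sym Px0_isolated).
by rewrite R_card cards1; apply.
Qed.

Lemma toughness_eq_inv_denom t :
  toughness_eq e t -> (0 < t)%R -> t = (1 / tough_denom%:R)%R.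
Proof.
move=> toughness_t t_gt0; have [S /tough_denom_gt1 b_gt1] := toughness_eq_cutset toughness_t.
have [e_tough maximal] := toughness_t.
apply/le_anti/andP; split.
  by rewrite ler_pdivlMr ?ltr0n 1?ltnW // tough_mul_denom_le1.
by rewrite leNgt; apply/negP => /maximal; apply; apply: tough_inv_denom.
Qed.

Lemma small_clique_tree : (0 < #|C|)%N -> (#|C| <= 2)%N -> is_tree e.
Proof.
move=> /card_gt0P[x0 x0C] C_le2; split; first by apply/card_gt0P; exists x0.
split.
  have clique_to_x0 c : c \in C -> connect e c x0.
    move=> cC; case: (eqVneq c x0) => [-> | cx0]; first exact: connect0.
    exact/connect1/clique_adj.
  have to_x0 a : connect e a x0.
    case/orP: (split_cases a) => [/clique_to_x0 // | aI].
    exact: connect_trans (connect1 (adj_f aI)) (clique_to_x0 _ (f_clique aI)).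
  by move=> a b; apply: connect_trans (to_x0 a) _; rewrite (sym_connect_sym e_sym).
move=> s us s_gt2; apply/negP => cs.
have [w ws wI] : exists2 w, w \in s & w \in I.
  apply/hasP; apply: contraTT s_gt2 => /hasPn s_C; rewrite -leqNgt.
  apply: leq_trans C_le2; rewrite -(card_uniqP us); apply/subset_leq_card/subsetP => z zs.
  by have := s_C z zs; case/orP: (split_cases z) => ->.
by have := uniq_cycle_deg_gt1 e_sym us s_gt2 cs ws; rewrite deg_indep.
Qed.

Lemma internal_vertices_clique : internal_vertices e \subset C.
Proof.
apply/subsetP => x; rewrite inE; case/orP: (split_cases x) => // xI.
by rewrite deg_indep.
Qed.

Lemma max_deg_small_clique : (0 < #|C|)%N -> (#|C| <= 2)%N -> max_deg e = tough_denom.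
Proof.
move=> C_gt0 C_le2.
have denomE : tough_denom = (max_pendants + #|C|.-1)%N.
  by rewrite /tough_denom; case: #|C| C_gt0 C_le2 => [|[|[|]]].
have [x0 x0C x0_max] := eq_bigmax_cond (fun z => #|pendants z|) C_gt0.
apply/eqP; rewrite eqn_leq; apply/andP; split.
  apply/bigmax_leqP => x _; case/orP: (split_cases x) => [xC | xI].
    by rewrite deg_clique // denomE addnC leq_add2r leq_bigmax_cond.
  rewrite deg_indep // denomE; apply: leq_trans (leq_addr _ _).
  apply: leq_trans (leq_bigmax_cond _ (f_clique xI)).
  by apply/card_gt0P; exists x; rewrite !inE xI eqxx.
apply: leq_trans (leq_bigmax x0).
by rewrite deg_clique // denomE /max_pendants x0_max addnC.
Qed.

Section MinimallyTough.
Variable t : rat.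
Hypotheses (e_min : minimally_tough e t) (t_gt0 : (0 < t)%R).

Lemma clique_excess_lt x y :
  x \in C -> y \in C -> x != y ->
  (#|C :\: [set x; y]| * tough_denom < 2 + #|[set w in I | f w \in C :\: [set x; y]]|)%N.
Proof.
move=> xC yC xy.
(* Every stranded vertex of the minimality cut S hangs from C :\: [set x; y]. *)
have [S [xS yS XS _ S_small]] := split_edge_cut e_irr e_min t_gt0 xC yC xy.
have [S0 /tough_denom_gt1 b_gt1] := toughness_eq_cutset e_min.1.
have b_gt0 : (0 < tough_denom%:R :> rat)%R by rewrite ltr0n ltnW.
have {S_small} : (#|S| * tough_denom < 2 + #|stranded S|)%N.
  move: S_small; rewrite (toughness_eq_inv_denom e_min.1 t_gt0) div1r mulrC.
  by rewrite ltr_pdivlMr // -natrM ltr_nat.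
move=> S_small; apply: leq_ltn_trans (leq_mul (subset_leq_card XS) (leqnn _)) _.
apply: leq_trans S_small _; rewrite leq_add2l.
apply/subset_leq_card/subsetP => k /setIdP[kI /andP[kS NkS]].
have fkS : f k \in S by apply: (subsetP NkS); rewrite inE adj_f.
rewrite !inE kI f_clique // andbT; apply: contraTN fkS => /orP[] /eqP-> //.
Qed.

Lemma clique_card_le3 : (#|C| <= 3)%N.
Proof.
rewrite leqNgt; apply/negP => C_gt3.
have [x xC] : exists x, x \in C by apply/card_gt0P; apply: leq_ltn_trans C_gt3.
have /card_gt0P[y /setD1P[yx yC]] : (0 < #|C :\ x|)%N.
  by move: C_gt3; rewrite (cardsD1 x C) xC; case: #|C :\ x|.
have X_card : #|C :\: [set x; y]| = (#|C| - 2)%N.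
  rewrite cardsD (setIidPr _) ?cards2 1?eq_sym ?yx //.
  by apply/subsetP => z; rewrite !inE => /orP[] /eqP->.
have xy : x != y by rewrite eq_sym.
have := clique_excess_lt xC yC xy; have := card_preimage_le (subsetDl C [set x; y]).
rewrite X_card /tough_denom (ltn_trans _ C_gt3) //; nia.
Qed.

Lemma pendants_card_max v :
  #|C| = 3 -> v \in C -> #|pendants v| = max_pendants.
Proof.
move=> C3 vC; apply/eqP; rewrite eqn_leq leq_bigmax_cond //=.
have /cards2P[x [y [xy Cv]]] : #|C :\ v| == 2.
  by move: C3; rewrite (cardsD1 v C) vC add1n => -[->].
have [xC yC] : x \in C /\ y \in C.
  by split; apply: (subsetP (subD1set C v)); rewrite Cv !inE eqxx ?orbT.
have X_v : C :\: [set x; y] = [set v].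
  apply/setP => z; rewrite -Cv !inE.
  by case: (eqVneq z v) => [-> | zv] /=; rewrite ?vC ?andNb.
have := clique_excess_lt xC yC xy; rewrite X_v cards1 mul1n /tough_denom C3 /=.
have -> : [set w in I | f w \in [set v]] = pendants v by apply/setP => w; rewrite !inE.
by rewrite addn1 add2n !ltnS.
Qed.

Lemma deg_clique_card3 v : #|C| = 3 -> v \in C -> deg e v = tough_denom.+1.
Proof.
by move=> C3 vC; rewrite deg_clique // pendants_card_max // /tough_denom C3 addn1 add2n.
Qed.

End MinimallyTough.

End Pendants.

End SplitGraph.

Theorem mainTheorem6 (T : finType) (e : rel T) (t : rat) (C I : {set T}) :
  simple_graph e ->
  (0 < t)%R -> (t <= 1 / 2%:R)%R ->
  minimally_tough e t ->
  split_partition e C I ->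
  exists b : nat,
    [/\ (0 < b)%N, t = (1 / b%:R)%R, (#|C| <= 3)%N &
      ((is_tree e /\ (#|internal_vertices e| <= 2)%N /\ max_deg e = b)
       \/
       [/\ #|C| = 3,
           (forall v, v \in I -> deg e v = 1) &
           (forall v, v \in C -> deg e v = b.+1)])].
Proof.
move=> [e_sym e_irr] t_gt0 t_small e_min e_split.
have [f adj_indepE] := indep_unique_neighbour e_sym e_split e_irr e_min t_gt0 t_small.
have [S /(tough_denom_gt1 e_sym e_split adj_indepE) b_gt1] := toughness_eq_cutset e_min.1.
have C_gt0 := card_clique_gt0 (ltnW b_gt1).
have C_le3 := clique_card_le3 e_sym e_split e_irr adj_indepE e_min t_gt0.
exists (tough_denom C I f); split => //; first exact: ltnW.
  exact: (toughness_eq_inv_denom e_sym e_split adj_indepE e_min.1 t_gt0).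
case: (leqP #|C| 2) => [C_le2 | C_gt2]; [left; split; [|split] | right].
- exact: (small_clique_tree e_sym e_split adj_indepE C_gt0 C_le2).
- exact: leq_trans (subset_leq_card (internal_vertices_clique e_split adj_indepE)) C_le2.
- exact: (max_deg_small_clique e_sym e_split e_irr adj_indepE C_gt0 C_le2).
have C3 : #|C| = 3 by apply/eqP; rewrite eqn_leq C_le3 C_gt2.
split=> // v vI; first exact: (deg_indep adj_indepE vI).
exact: (deg_clique_card3 e_sym e_split e_irr adj_indepE e_min t_gt0 C3 vI).
Qed.
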